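(* Let $(a_n)_{n\ge0}$ and $(a'_n)_{n\ge0}$ be sequences of positive real numbers and $(b_n)_{n\ge0}$ a sequence of real numbers such that, for all sufficiently large $n$: (i) $\frac{a'_{n+1}}{a'_n}\leq\frac{a_{n+1}}{a_n}$; (ii) $a_n\leq a'_n+b_n$; and (iii) $\frac{b_n}{a'_n}<R$ for some fixed real number $R$. Then there exists a strictly increasing sequence of natural numbers $(n_i)_{i\ge0}$ such that \[\lim_{i\to\infty}\frac{a_{n_i+1}/a_{n_i}}{a'_{n_i+1}/a'_{n_i}}=1.\] *)

From Stdlib Require Import Reals.
Open Scope R_scope.

(** The quotient [a n / a' n] is eventually nondecreasing by (i) and bounded above
    by [1 + R] by (ii) and (iii), so it converges to a positive limit [l].  The
    ratio in question is the quotient of two consecutive terms of that sequence,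
    hence tends to [l / l = 1]; the whole tail [n_i = N + i] is a valid choice. *)

From Stdlib Require Import Reals Lra Lia.
Open Scope R_scope.

Lemma Rdiv_le_transpose (x x' y y' : R) :
  0 < x -> 0 < x' -> 0 < y' -> y' / x' <= y / x -> x / x' <= y / y'.
Proof.
  intros Hx Hx' Hy' Hle.
  replace (x / x') with (x / y' * (y' / x')) by (field; lra).
  replace (y / y') with (x / y' * (y / x)) by (field; lra).
  apply Rmult_le_compat_l; [left; apply Rdiv_lt_0_compat|]; assumption.
Qed.

Lemma Rdiv_le_1_plus (x y z : R) : 0 < z -> x <= z + y -> x / z <= 1 + y / z.
Proof.
  intros Hz Hle.
  replace (1 + y / z) with ((z + y) / z) by (field; lra).
  apply Rmult_le_compat_r; [left; apply Rinv_0_lt_compat|]; assumption.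
Qed.

Lemma Un_cv_inv (u : nat -> R) (l : R) :
  l <> 0 -> Un_cv u l -> Un_cv (fun n => / u n) (/ l).
Proof.
  intros Hl Hu.
  apply (continuity_seq (fun x => / x)); [|exact Hu].
  apply (continuity_pt_inv id); [apply derivable_continuous, derivable_id | exact Hl].
Qed.

Lemma Un_cv_succ_ratio (u : nat -> R) (l : R) :
  l <> 0 -> Un_cv u l -> Un_cv (fun n => u (S n) / u n) 1.
Proof.
  intros Hl Hu.
  rewrite <- (Rinv_r l Hl).
  apply CV_mult; [|now apply Un_cv_inv].
  apply Un_cv_ext with (fun n => u (n + 1)%nat); [intro n; f_equal; lia|].
  exact (CV_shift' u 1 l Hu).
Qed.

Lemma growing_bound_pos_cv (u : nat -> R) :
  (forall n, 0 < u n) -> Un_growing u -> bound (EUn u) ->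
  exists l, 0 < l /\ Un_cv u l.
Proof.
  intros Hpos Hgrow Hbound.
  destruct (growing_cv u Hgrow Hbound) as [l Hl].
  exists l; split; [|exact Hl].
  apply Rlt_le_trans with (u 0%nat); [apply Hpos|].
  exact (growing_ineq u l Hgrow Hl 0%nat).
Qed.

Theorem mainTheorem3 (a a' b : nat -> R)
  (ha : forall n, 0 < a n) (ha' : forall n, 0 < a' n)
  (hev : exists (R0 : R) (N : nat), forall n, (N <= n)%nat ->
      a' (S n) / a' n <= a (S n) / a n /\
      a n <= a' n + b n /\
      b n / a' n < R0) :
  exists ni : nat -> nat,
    (forall i, (ni i < ni (S i))%nat) /\
    Un_cv (fun i => (a (S (ni i)) / a (ni i)) / (a' (S (ni i)) / a' (ni i))) 1.
Proof.
  destruct hev as [R0 [N hN]].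
  set (u := fun i => a (N + i)%nat / a' (N + i)%nat).
  assert (u_pos : forall i, 0 < u i) by (intro; apply Rdiv_lt_0_compat; auto).
  assert (u_growing : Un_growing u).
  { intro i; unfold u; rewrite Nat.add_succ_r.
    destruct (hN (N + i)%nat) as [Hratio _]; [lia|].
    apply Rdiv_le_transpose; auto. }
  assert (u_bounded : bound (EUn u)).
  { exists (1 + R0); intros x [i ->].
    destruct (hN (N + i)%nat) as [_ [Hab Hb]]; [lia|].
    apply Rle_trans with (1 + b (N + i)%nat / a' (N + i)%nat); [|lra].
    apply Rdiv_le_1_plus; auto. }
  destruct (growing_bound_pos_cv u u_pos u_growing u_bounded) as [l [Hl Hu]].
  exists (fun i => (N + i)%nat); split; [intro; lia|].
  apply Un_cv_ext with (fun i => u (S i) / u i).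
  - intro i; unfold u; rewrite Nat.add_succ_r.
    pose proof (ha (N + i)%nat); pose proof (ha (S (N + i))).
    pose proof (ha' (N + i)%nat); pose proof (ha' (S (N + i))).
    field; repeat split; lra.
  - apply Un_cv_succ_ratio with l; [lra | exact Hu].
Qed.
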